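(* Let $n\ge2$ and $\mu\in(0,\frac1n(\frac{n-1}{n})^{n-1})$. Let $\mathcal{D}(\mu)\subset\mathbb{R}^{n+1}$ be the Euclidean Delaunay unduloid with profile $f$, normalized so that $f(0)=a_-(\mu)$, and with period $T(\mu)$. Let $$a(x)=(1+f'(x)^2)^{-1/2}f'(x),$$ regarded as a function on $\mathcal{D}(\mu)$. Then: 1. $(\Delta-V)a=0$ on $\mathcal{D}(\mu)$; 2. $a$ vanishes exactly at the points $x=kT(\mu)/2$, $k\in\mathbb{Z}$; 3. $a'$ has exactly two zeros $\zeta_1(\mu),\zeta_2(\mu)$ in $[0,T(\mu)]$, and they satisfy $0<\zeta_1(\mu)<T(\mu)/2<\zeta_2(\mu)<T(\mu)$.
   Context: For $\mu\in(0,\frac1n(\frac{n-1}{n})^{n-1})$, $f$ is a nonconstant positive solution on $\mathbb{R}$ of $\mu=f^{n-1}(1+f'^2)^{-1/2}-f^n$. The unduloid $\mathcal{D}(\mu)$ is parametrized by $F(x,\omega)=(x,f(x)\omega)$, $\omega\in S^{n-1}$; it has constant mean curvature $1$ with respect to the unit normal $N=(1+f'^2)^{-1/2}(f',-\omega)$. The function $f$ oscillates between $a_-(\mu)$ and $a_+(\mu)$, the two positive roots of $X^n-X^{n-1}+\mu=0$. It is $T(\mu)$-periodic, where $T(\mu)$ is the distance between consecutive minima. $\Delta$ is the non-negative Laplace–Beltrami operator of the induced metric, and $V=\|B\|^2=n(1+(n-1)\mu^2f^{-2n})$. Note that $a=\langle N,(1,0,\dots,0)\rangle$. *)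

From Stdlib Require Import Reals Lra.
From Coquelicot Require Import Coquelicot.
Open Scope R_scope.

Definition delaunay_ode (n : nat) (mu : R) (f : R -> R) : Prop :=
  forall x, mu = f x ^ (n - 1) / sqrt (1 + (Derive f x) ^ 2) - f x ^ n.

Definition is_a_minus (n : nat) (mu am : R) : Prop :=
  0 < am /\ am ^ n - am ^ (n - 1) + mu = 0 /\
  (forall y, 0 < y -> y ^ n - y ^ (n - 1) + mu = 0 -> am <= y).

(* The function a(x) = (1+f'^2)^{-1/2} f', i.e. <N, e_1>. *)
Definition a_fun (f : R -> R) (x : R) : R :=
  Derive f x / sqrt (1 + (Derive f x) ^ 2).

(* Non-negative Laplace-Beltrami operator of the induced metric
   (1+f'^2) dx^2 + f^2 g_{S^{n-1}} on D(mu), applied to a function u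
   depending only on the axial variable x:
   Delta u = - (f^{n-1} sqrt(1+f'^2))^{-1} d/dx ( f^{n-1} u' / sqrt(1+f'^2) ). *)
Definition lap_rad (n : nat) (f u : R -> R) (x : R) : R :=
  - (Derive (fun y => f y ^ (n - 1) * Derive u y / sqrt (1 + (Derive f y) ^ 2)) x)
    / (f x ^ (n - 1) * sqrt (1 + (Derive f x) ^ 2)).

(* V = |B|^2 = n (1 + (n-1) mu^2 f^{-2n}). *)
Definition V_pot (n : nat) (mu : R) (f : R -> R) (x : R) : R :=
  INR n * (1 + (INR n - 1) * mu ^ 2 / f x ^ (2 * n)).

From Stdlib Require Import Reals Lra Lia ZArith Classical.
From Coquelicot Require Import Coquelicot.
Open Scope R_scope.

(* Write n = k + 2. The ODE says (1 + f'^2)^(-1/2) = U(f) with U(y) = mu / y^(n-1) + y,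
   so a = f' U(f), and differentiating 1 + f'^2 = U(f)^-2 gives f' (f'' - F(f)) = 0 with
   F = -U' / U^3. The defect f'' - F(f) is continuous, and where it is nonzero f sits at a root
   of P(y) = y^n - y^(n-1) + mu; as P has at most two positive roots and f is not constant,
   f'' = F(f) everywhere. Then a' = -U'(f) = (n-1) mu / f^n - 1, the flux f^(n-1) a' U(f) is a
   function of f whose derivative gives the Jacobi equation, and the zeros of a' are the points
   where f^n = (n-1) mu. By uniqueness for f'' = F(f), f is symmetric about each of its critical
   points; minimality of T at 0 leaves 0 and T/2 as the only critical points in [0, T), so f
   increases on [0, T/2] from the root am to the root f(T/2), which lie on either side of the
   critical point (n-1)/n of P, hence f^n crosses (n-1) mu exactly once there. *)

Lemma nonincreasing_of_is_derive_nonpos (g dg : R -> R) :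
  (forall x, is_derive g x (dg x)) -> (forall x, dg x <= 0) ->
  forall x y, x <= y -> g y <= g x.
Proof.
  intros Hd Hneg x y Hxy.
  destruct (Rle_lt_or_eq_dec _ _ Hxy) as [Hlt|<-]; [|lra].
  destruct (MVT_cor2 g dg x y Hlt) as [c [Hc _]].
  { intros c _. apply is_derive_Reals, Hd. }
  specialize (Hneg c). nra.
Qed.

Lemma strict_increasing_on_of_is_derive_pos (g dg : R -> R) (a b : R) :
  (forall x, a <= x <= b -> is_derive g x (dg x)) ->
  (forall x, a < x < b -> 0 < dg x) ->
  forall x y, a <= x -> x < y -> y <= b -> g x < g y.
Proof.
  intros Hd Hpos x y Hx Hxy Hy.
  destruct (MVT_cor2 g dg x y Hxy) as [c [Hc Hcxy]].
  { intros c Hc. apply is_derive_Reals, Hd. lra. }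
  assert (0 < dg c) by (apply Hpos; lra).
  nra.
Qed.

Lemma constant_of_is_derive_0 (g dg : R -> R) :
  (forall x, is_derive g x (dg x)) -> (forall x, dg x = 0) ->
  forall x y, g x = g y.
Proof.
  intros Hd H0 x y.
  destruct (MVT_abs g dg x y) as [c [Hc _]].
  { intros c _. apply is_derive_Reals, Hd. }
  rewrite H0, Rabs_R0, Rmult_0_l in Hc.
  apply Rabs_eq_0 in Hc. lra.
Qed.

Lemma lipschitz_on_of_continuous_derivative (g dg : R -> R) (A B : R) :
  A <= B ->
  (forall y, A <= y <= B -> is_derive g y (dg y)) ->
  (forall y, A <= y <= B -> continuity_pt dg y) ->
  exists L, 0 <= L /\ forall a b, A <= a <= B -> A <= b <= B ->
    Rabs (g a - g b) <= L * Rabs (a - b).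
Proof.
  intros HAB Hd Hc.
  destruct (continuity_ab_maj (fun y => Rabs (dg y)) A B HAB) as [M [HM _]].
  { intros y Hy. apply (continuity_pt_comp dg Rabs); [now apply Hc|apply Rcontinuity_abs]. }
  exists (Rabs (dg M)). split; [apply Rabs_pos|].
  intros a b Ha Hb.
  assert (Hab : A <= Rmin b a /\ Rmax b a <= B).
  { unfold Rmin, Rmax. destruct (Rle_dec b a); lra. }
  destruct (MVT_abs g dg b a) as [c [Hgc Hcab]].
  { intros c Hc'. apply is_derive_Reals, Hd. lra. }
  rewrite Hgc. apply Rmult_le_compat_r; [apply Rabs_pos|]. apply HM. lra.
Qed.

Lemma gronwall_vanish (E dE : R -> R) (K x0 : R) :
  (forall t, is_derive E t (dE t)) -> (forall t, Rabs (dE t) <= K * E t) ->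
  (forall t, 0 <= E t) -> E x0 = 0 -> forall x, E x = 0.
Proof.
  intros Hd Hb Hnn H0 x.
  assert (HD : forall t, Derive E t = dE t) by (intros t; apply is_derive_unique, Hd).
  assert (HE : forall t, ex_derive E t) by (intros t; eexists; apply Hd).
  pose proof (Hnn x).
  destruct (Rle_or_lt x0 x) as [Hx|Hx].
  - assert (Hle : E x * exp (- K * x) <= E x0 * exp (- K * x0)).
    { apply (nonincreasing_of_is_derive_nonpos (fun t => E t * exp (- K * t))
               (fun t => (dE t - K * E t) * exp (- K * t))); [| |exact Hx].
      - intros t. auto_derive; [apply HE|]. rewrite HD. ring.
      - intros t. pose proof (exp_pos (- K * t)). specialize (Hb t).
        pose proof (Rle_abs (dE t)). apply Rmult_le_0_r; lra. }
    rewrite H0, Rmult_0_l in Hle. pose proof (exp_pos (- K * x)). nra.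
  - assert (Hle : - (E x0 * exp (K * x0)) <= - (E x * exp (K * x))).
    { apply (nonincreasing_of_is_derive_nonpos (fun t => - (E t * exp (K * t)))
               (fun t => - ((dE t + K * E t) * exp (K * t)))); [| |lra].
      - intros t. auto_derive; [apply HE|]. rewrite HD. ring.
      - intros t. pose proof (exp_pos (K * t)). specialize (Hb t).
        pose proof (Rle_abs (- dE t)) as Hn. rewrite Rabs_Ropp in Hn.
        assert (0 <= (dE t + K * E t) * exp (K * t)) by (apply Rmult_le_pos; lra). lra. }
    rewrite H0, Rmult_0_l in Hle. pose proof (exp_pos (K * x)). nra.
Qed.

Lemma energy_derivative_bound (L d e D : R) :
  0 <= L -> Rabs D <= L * Rabs d ->
  Rabs (2 * d * e + 2 * e * D) <= (1 + L) * (d ^ 2 + e ^ 2).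
Proof.
  intros HL HD.
  assert (Rabs (2 * d * e + 2 * e * D) <= 2 * Rabs d * Rabs e + 2 * Rabs e * (L * Rabs d)).
  { eapply Rle_trans; [apply Rabs_triang|].
    rewrite !Rabs_mult, (Rabs_pos_eq 2) by lra.
    apply Rplus_le_compat_l, Rmult_le_compat_l; [|exact HD].
    apply Rmult_le_pos; [lra|apply Rabs_pos]. }
  assert (2 * Rabs d * Rabs e <= d ^ 2 + e ^ 2).
  { rewrite <- (pow2_abs d), <- (pow2_abs e). pose proof (pow2_ge_0 (Rabs d - Rabs e)). nra. }
  assert (L * (2 * Rabs d * Rabs e) <= L * (d ^ 2 + e ^ 2)) by (apply Rmult_le_compat_l; lra).
  nra.
Qed.

(* Gronwall for the energy [(y1 - y2)^2 + (y1' - y2')^2]. *)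
Lemma ode2_autonomous_unique (F : R -> R) (L : R) (y1 y2 : R -> R) (x0 : R) :
  0 <= L ->
  (forall x, Rabs (F (y1 x) - F (y2 x)) <= L * Rabs (y1 x - y2 x)) ->
  (forall x, is_derive y1 x (Derive y1 x)) ->
  (forall x, is_derive (Derive y1) x (F (y1 x))) ->
  (forall x, is_derive y2 x (Derive y2 x)) ->
  (forall x, is_derive (Derive y2) x (F (y2 x))) ->
  y1 x0 = y2 x0 -> Derive y1 x0 = Derive y2 x0 ->
  forall x, y1 x = y2 x.
Proof.
  intros HL HF d1 dd1 d2 dd2 H0 H1 x.
  set (E := fun t => (y1 t - y2 t) ^ 2 + (Derive y1 t - Derive y2 t) ^ 2).
  assert (HE : forall t, is_derive E t
    (2 * (y1 t - y2 t) * (Derive y1 t - Derive y2 t)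
     + 2 * (Derive y1 t - Derive y2 t) * (F (y1 t) - F (y2 t)))).
  { intros t. unfold E. auto_derive.
    - repeat split; eexists; eauto.
    - change (Derive (fun x => Derive y1 x) t) with (Derive (Derive y1) t).
      change (Derive (fun x => Derive y2 x) t) with (Derive (Derive y2) t).
      rewrite (is_derive_unique _ _ _ (dd1 t)), (is_derive_unique _ _ _ (dd2 t)).
      change (Derive (fun x => y1 x)) with (Derive y1).
      change (Derive (fun x => y2 x)) with (Derive y2). ring. }
  assert (HEx : E x = 0).
  { apply (gronwall_vanish E _ (1 + L) x0 HE).
    - intros t. apply energy_derivative_bound; [exact HL|apply HF].
    - intros t. unfold E. pose proof (pow2_ge_0 (y1 t - y2 t)).
      pose proof (pow2_ge_0 (Derive y1 t - Derive y2 t)). lra.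
    - unfold E. rewrite H0, H1. ring. }
  unfold E in HEx.
  pose proof (pow2_ge_0 (y1 x - y2 x)). pose proof (pow2_ge_0 (Derive y1 x - Derive y2 x)).
  nra.
Qed.

Lemma locally_eq_0_of_mul_eq_0 (g h : R -> R) (x : R) :
  (forall y, g y * h y = 0) -> continuous h x -> h x <> 0 ->
  locally x (fun y => g y = 0).
Proof.
  intros Hgh Hc Hx.
  assert (eps : 0 < Rabs (h x)) by (apply Rabs_pos_lt, Hx).
  generalize (proj1 (filterlim_locally _ _) Hc (mkposreal _ eps)).
  apply filter_imp. intros y Hy. change (Rabs (h y - h x) < Rabs (h x)) in Hy.
  destruct (Rmult_integral _ _ (Hgh y)) as [|Hh]; [assumption|].
  rewrite Hh, Rminus_0_l, Rabs_Ropp in Hy. lra.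
Qed.

Lemma periodic_nat (g : R -> R) (T : R) : (forall x, g (x + T) = g x) ->
  forall (j : nat) x, g (x + INR j * T) = g x.
Proof.
  intros Hg j. induction j as [|j IH]; intros x.
  - simpl. f_equal. ring.
  - replace (x + INR (S j) * T) with (x + INR j * T + T) by (rewrite S_INR; ring).
    rewrite Hg. apply IH.
Qed.

Lemma periodic_Z (g : R -> R) (T : R) : (forall x, g (x + T) = g x) ->
  forall (j : Z) x, g (x + IZR j * T) = g x.
Proof.
  intros Hg j x. destruct j as [|p|p].
  - simpl. f_equal. ring.
  - rewrite <- positive_nat_Z, <- INR_IZR_INZ. apply periodic_nat, Hg.
  - rewrite <- (periodic_nat g T Hg (Pos.to_nat p) (x + IZR (Z.neg p) * T)).
    f_equal. rewrite <- Pos2Z.opp_pos, opp_IZR, <- positive_nat_Z, <- INR_IZR_INZ. ring.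
Qed.

Lemma period_floor (T x : R) : 0 < T -> exists j : Z, IZR j * T <= x < IZR j * T + T.
Proof.
  intros HT. destruct (archimed (x / T)) as [H1 H2].
  exists (up (x / T) - 1)%Z. rewrite minus_IZR.
  assert (Hx : x = (x / T) * T) by (field; lra).
  split.
  - rewrite Hx at 2. apply Rmult_le_compat_r; lra.
  - replace ((IZR (up (x / T)) - 1) * T + T) with (IZR (up (x / T)) * T) by ring.
    rewrite Hx at 1. apply Rmult_lt_compat_r; lra.
Qed.

Lemma is_derive_shift (g : R -> R) (c x l : R) :
  is_derive g (x + c) l -> is_derive (fun u => g (u + c)) x l.
Proof.
  intros H. replace l with (1 * l) by ring.
  apply (is_derive_comp g (fun u => u + c)); [exact H|].
  auto_derive; [exact I|ring].
Qed.

Lemma is_derive_reflect (g : R -> R) (c x l : R) :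
  is_derive g (c - x) l -> is_derive (fun u => g (c - u)) x (- l).
Proof.
  intros H. replace (- l) with (-1 * l) by ring.
  apply (is_derive_comp g (fun u => c - u)); [exact H|].
  auto_derive; [exact I|ring].
Qed.

(* [auto_derive] unfolds [INR (S k)] into its defining [match]; fold it back
   and expose the powers to [field]. *)
Ltac normalize_INR_pow k :=
  try change (match k with 0%nat => 1 | S _ => INR k + 1 end) with (INR (S k)) in *;
  try change (match S k with 0%nat => 1 | S _ => INR (S k) + 1 end) with (INR (S (S k))) in *;
  rewrite ?S_INR in *; cbn [pow] in *.

Ltac nonzero_by_lra :=
  repeat split; repeat apply Rmult_integral_contrapositive_currified; lra.

Definition delaunay_P (k : nat) (mu y : R) : R := y ^ S (S k) - y ^ S k + mu.

Lemma is_derive_delaunay_P (k : nat) (mu y : R) :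
  is_derive (delaunay_P k mu) y (y ^ k * (INR (S (S k)) * y - INR (S k))).
Proof.
  unfold delaunay_P. auto_derive; [exact I|]. normalize_INR_pow k. ring.
Qed.

Lemma delaunay_P_roots_separated (k : nat) (mu r s : R) :
  0 < r -> r < s -> delaunay_P k mu r = 0 -> delaunay_P k mu s = 0 ->
  INR (S (S k)) * r < INR (S k) < INR (S (S k)) * s.
Proof.
  intros Hr Hrs Pr Ps.
  assert (Hn : 0 < INR (S (S k))) by (apply lt_0_INR; lia).
  set (dP := fun y => y ^ k * (INR (S (S k)) * y - INR (S k))).
  assert (Hk : forall y, 0 < y -> 0 < y ^ k) by (intros; apply pow_lt; lra).
  split.
  - destruct (Rlt_or_le (INR (S (S k)) * r) (INR (S k))) as [|Hc]; [assumption|exfalso].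
    assert (delaunay_P k mu r < delaunay_P k mu s); [|lra].
    apply (strict_increasing_on_of_is_derive_pos _ dP r s); try lra.
    + intros y _. apply is_derive_delaunay_P.
    + intros y Hy. apply Rmult_lt_0_compat; [apply Hk; lra|nra].
  - destruct (Rlt_or_le (INR (S k)) (INR (S (S k)) * s)) as [|Hc]; [assumption|exfalso].
    assert (- delaunay_P k mu r < - delaunay_P k mu s); [|lra].
    apply (strict_increasing_on_of_is_derive_pos (fun y => - delaunay_P k mu y)
             (fun y => - dP y) r s); try lra.
    + intros y _. apply (is_derive_opp (delaunay_P k mu)), is_derive_delaunay_P.
    + intros y Hy. unfold dP. rewrite Ropp_mult_distr_r.
      apply Rmult_lt_0_compat; [apply Hk; lra|nra].
Qed.

Lemma delaunay_P_no_three_roots (k : nat) (mu r1 r2 r3 : R) :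
  0 < r1 -> 0 < r2 -> 0 < r3 -> r1 <> r2 -> r1 <> r3 -> r2 <> r3 ->
  delaunay_P k mu r1 = 0 -> delaunay_P k mu r2 = 0 -> delaunay_P k mu r3 = 0 -> False.
Proof.
  intros H1 H2 H3 H12 H13 H23 P1 P2 P3.
  set (N := INR (S (S k))).
  assert (sep : forall r s, 0 < r -> 0 < s -> r <> s ->
            delaunay_P k mu r = 0 -> delaunay_P k mu s = 0 ->
            (N * r < INR (S k) < N * s) \/ (N * s < INR (S k) < N * r)).
  { intros r s Hr Hs Hrs Pr Ps.
    destruct (Rtotal_order r s) as [Hlt|[Heq|Hgt]]; [left|contradiction|right];
      apply delaunay_P_roots_separated with mu; assumption. }
  pose proof (sep r1 r2 H1 H2 H12 P1 P2). pose proof (sep r1 r3 H1 H3 H13 P1 P3).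
  pose proof (sep r2 r3 H2 H3 H23 P2 P3). lra.
Qed.

Lemma delaunay_P_root_pow_sub (k : nat) (mu r : R) : delaunay_P k mu r = 0 ->
  r ^ S (S k) - INR (S k) * mu = r ^ S k * (INR (S (S k)) * r - INR (S k)).
Proof.
  intros P. unfold delaunay_P in P.
  replace mu with (r ^ S k - r ^ S (S k)) by lra.
  rewrite (S_INR (S k)). simpl. ring.
Qed.

(* With [n = k + 2]: along a profile [f], [delaunay_U k mu (f x)] is
   [(1 + f'(x)^2)^(-1/2)] and [f'' = delaunay_F k mu f]. *)
Definition delaunay_U (k : nat) (mu y : R) : R := mu / y ^ S k + y.

Definition delaunay_dU (k : nat) (mu y : R) : R := 1 - INR (S k) * mu / y ^ S (S k).

Definition delaunay_F (k : nat) (mu y : R) : R :=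
  - delaunay_dU k mu y / delaunay_U k mu y ^ 3.

Definition delaunay_dF (k : nat) (mu y : R) : R :=
  - (INR (S (S k)) * INR (S k) * mu / y ^ S (S (S k))) / delaunay_U k mu y ^ 3
  + 3 * delaunay_dU k mu y ^ 2 / delaunay_U k mu y ^ 4.

Definition delaunay_flux (k : nat) (mu y : R) : R :=
  - delaunay_dU k mu y * (mu + y ^ S (S k)).

Lemma delaunay_U_pos (k : nat) (mu y : R) : 0 <= mu -> 0 < y -> 0 < delaunay_U k mu y.
Proof.
  intros Hmu Hy. unfold delaunay_U. pose proof (pow_lt y (S k) Hy).
  assert (0 <= mu / y ^ S k) by (apply Rdiv_le_0_compat; lra). lra.
Qed.

Lemma delaunay_U_mul (k : nat) (mu y : R) :
  0 < y -> y ^ S k * delaunay_U k mu y = mu + y ^ S (S k).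
Proof.
  intros Hy. pose proof (pow_lt y k Hy). unfold delaunay_U. simpl. field. lra.
Qed.

Lemma delaunay_P_eq_U (k : nat) (mu y : R) :
  0 < y -> delaunay_P k mu y = y ^ S k * (delaunay_U k mu y - 1).
Proof.
  intros Hy. rewrite Rmult_minus_distr_l, delaunay_U_mul by exact Hy.
  unfold delaunay_P. ring.
Qed.

Lemma delaunay_P_eq_0_iff (k : nat) (mu y : R) :
  0 < y -> delaunay_P k mu y = 0 <-> delaunay_U k mu y = 1.
Proof.
  intros Hy. rewrite delaunay_P_eq_U by exact Hy. pose proof (pow_lt y (S k) Hy).
  split; intros E; [destruct (Rmult_integral _ _ E); lra|rewrite E; ring].
Qed.

Lemma is_derive_delaunay_U (k : nat) (mu y : R) :
  0 < y -> is_derive (delaunay_U k mu) y (delaunay_dU k mu y).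
Proof.
  intros Hy. pose proof (pow_lt y k Hy).
  unfold delaunay_U, delaunay_dU.
  auto_derive; normalize_INR_pow k; [nonzero_by_lra|field; nonzero_by_lra].
Qed.

Lemma is_derive_delaunay_F (k : nat) (mu y : R) :
  0 <= mu -> 0 < y -> is_derive (delaunay_F k mu) y (delaunay_dF k mu y).
Proof.
  intros Hmu Hy. pose proof (delaunay_U_pos k mu y Hmu Hy).
  pose proof (pow_lt y k Hy). pose proof (pow_lt y (S (S k)) Hy).
  unfold delaunay_dF, delaunay_F, delaunay_dU, delaunay_U in *.
  auto_derive; normalize_INR_pow k; [nonzero_by_lra|field; nonzero_by_lra].
Qed.

Lemma continuity_pt_delaunay_dF (k : nat) (mu y : R) :
  0 <= mu -> 0 < y -> continuity_pt (delaunay_dF k mu) y.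
Proof.
  intros Hmu Hy. apply continuity_pt_filterlim, (ex_derive_continuous (delaunay_dF k mu)).
  pose proof (delaunay_U_pos k mu y Hmu Hy).
  pose proof (pow_lt y k Hy). pose proof (pow_lt y (S (S k)) Hy).
  unfold delaunay_dF, delaunay_dU, delaunay_U in *.
  auto_derive. normalize_INR_pow k. nonzero_by_lra.
Qed.

Lemma is_derive_inv_sq_delaunay_U (k : nat) (mu y : R) :
  0 <= mu -> 0 < y ->
  is_derive (fun y => / delaunay_U k mu y ^ 2) y (2 * delaunay_F k mu y).
Proof.
  intros Hmu Hy. pose proof (delaunay_U_pos k mu y Hmu Hy).
  replace (2 * delaunay_F k mu y) with
    (- (INR 2 * delaunay_dU k mu y * delaunay_U k mu y ^ Nat.pred 2) / (delaunay_U k mu y ^ 2) ^ 2).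
  - apply is_derive_inv; [apply is_derive_pow, is_derive_delaunay_U, Hy|].
    apply pow_nonzero. lra.
  - unfold delaunay_F. simpl. field. lra.
Qed.

Lemma is_derive_delaunay_flux (k : nat) (mu y : R) : 0 < y ->
  is_derive (delaunay_flux k mu) y
    (- INR (S (S k)) * y ^ S k * (1 + (INR (S (S k)) - 1) * mu ^ 2 / y ^ (2 * S (S k)))).
Proof.
  intros Hy. pose proof (pow_lt y k Hy).
  replace (2 * S (S k))%nat with (S (S k) + S (S k))%nat by lia. rewrite pow_add.
  unfold delaunay_flux, delaunay_dU.
  auto_derive; normalize_INR_pow k; [nonzero_by_lra|field; nonzero_by_lra].
Qed.

Section DelaunayProfile.

Variables (k : nat) (mu : R) (f : R -> R).
Hypothesis mu_ge0 : 0 <= mu.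
Hypothesis f_smooth : forall (j : nat) (x : R), ex_derive_n f j x.
Hypothesis f_pos : forall x, 0 < f x.
Hypothesis f_nonconst : exists x y, f x <> f y.
Hypothesis f_ode : forall x, mu = f x ^ S k / sqrt (1 + Derive f x ^ 2) - f x ^ S (S k).

Local Notation df := (Derive f).
Local Notation ddf := (Derive (Derive f)).
Local Notation U := (delaunay_U k mu).
Local Notation F := (delaunay_F k mu).

Lemma is_derive_f x : is_derive f x (df x).
Proof. apply Derive_correct, (f_smooth 1). Qed.

Lemma is_derive_df x : is_derive df x (ddf x).
Proof. apply Derive_correct, (f_smooth 2). Qed.

Lemma is_derive_U_f x : is_derive (fun t => U (f t)) x (df x * delaunay_dU k mu (f x)).
Proof.
  apply (is_derive_comp U f); [apply is_derive_delaunay_U, f_pos|apply is_derive_f].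
Qed.

Lemma sqrt_slope_eq x : sqrt (1 + df x ^ 2) = / U (f x).
Proof.
  assert (Hs : 0 < sqrt (1 + df x ^ 2)).
  { apply sqrt_lt_R0. pose proof (pow2_ge_0 (df x)). lra. }
  pose proof (delaunay_U_pos k mu (f x) mu_ge0 (f_pos x)).
  pose proof (pow_lt (f x) (S k) (f_pos x)).
  apply (Rmult_eq_reg_l (U (f x))); [|lra].
  rewrite Rinv_r by lra. unfold delaunay_U. rewrite (f_ode x) at 1.
  change (f x ^ S (S k)) with (f x * f x ^ S k). field. lra.
Qed.

Lemma slope_sq_eq x : 1 + df x ^ 2 = / U (f x) ^ 2.
Proof.
  rewrite <- pow_inv, <- sqrt_slope_eq, pow2_sqrt; [reflexivity|].
  pose proof (pow2_ge_0 (df x)). lra.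
Qed.

Lemma df_eq_0_iff x : df x = 0 <-> delaunay_P k mu (f x) = 0.
Proof.
  pose proof (slope_sq_eq x) as Hsq.
  pose proof (delaunay_U_pos k mu (f x) mu_ge0 (f_pos x)).
  rewrite (delaunay_P_eq_0_iff k mu (f x) (f_pos x)). split; intros E.
  - rewrite E in Hsq. assert (U (f x) ^ 2 = 1).
    { rewrite <- (Rinv_inv (U (f x) ^ 2)), <- Hsq. field. }
    nra.
  - rewrite E in Hsq. assert (df x ^ 2 = 0) by (field_simplify in Hsq; lra). nra.
Qed.

(* Differentiating the first integral [1 + f'^2 = U(f)^-2]. *)
Lemma df_mul_accel_defect x : df x * (ddf x - F (f x)) = 0.
Proof.
  assert (L1 : is_derive (fun x => 1 + df x ^ 2) x (2 * df x * ddf x)).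
  { auto_derive; [eexists; apply is_derive_df|].
    change (Derive (fun x => df x) x) with (ddf x). ring. }
  assert (L2 : is_derive (fun x => 1 + df x ^ 2) x (df x * (2 * F (f x)))).
  { apply (is_derive_ext (fun x => / U (f x) ^ 2)); [intros t; symmetry; apply slope_sq_eq|].
    apply (is_derive_comp (fun y => / U y ^ 2) f);
      [apply is_derive_inv_sq_delaunay_U; [exact mu_ge0|apply f_pos]|apply is_derive_f]. }
  pose proof (is_derive_unique _ _ _ L1) as E1. rewrite (is_derive_unique _ _ _ L2) in E1.
  lra.
Qed.

Lemma accel_defect_continuous x : continuous (fun x => ddf x - F (f x)) x.
Proof.
  apply (ex_derive_continuous (fun x => ddf x - F (f x))).
  apply (ex_derive_minus (fun x => ddf x) (fun x => F (f x))); [apply (f_smooth 3)|].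
  eexists. apply (is_derive_comp F f);
    [apply is_derive_delaunay_F; [exact mu_ge0|apply f_pos]|apply is_derive_f].
Qed.

(* Where the defect is nonzero, [f'] vanishes on a neighbourhood, so [f'' = 0] and [f] sits at
   a root of [P], where [U = 1]. *)
Lemma accel_defect_nonzero x : ddf x - F (f x) <> 0 ->
  delaunay_P k mu (f x) = 0 /\ ddf x - F (f x) = delaunay_dU k mu (f x).
Proof.
  intros Hx.
  assert (Hloc : locally x (fun y => df y = 0)).
  { apply (locally_eq_0_of_mul_eq_0 df (fun y => ddf y - F (f y)));
      [exact df_mul_accel_defect|apply accel_defect_continuous|exact Hx]. }
  assert (Hroot : delaunay_P k mu (f x) = 0) by apply df_eq_0_iff, (locally_singleton _ _ Hloc).
  assert (Hdd : ddf x = 0).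
  { apply is_derive_unique, (is_derive_ext_loc (fun _ => 0)); [|apply (is_derive_const 0)].
    revert Hloc. apply filter_imp. intros y Hy. now rewrite Hy. }
  split; [exact Hroot|].
  apply (delaunay_P_eq_0_iff k mu (f x) (f_pos x)) in Hroot.
  rewrite Hdd. unfold delaunay_F. rewrite Hroot. field.
Qed.

Lemma exists_df_neq_0 : exists x1, df x1 <> 0.
Proof.
  destruct f_nonconst as [p [q Hpq]].
  apply NNPP. intros Hno. apply Hpq.
  apply (constant_of_is_derive_0 f df); [exact is_derive_f|].
  intros x. apply NNPP. intros Hx. apply Hno. exists x. exact Hx.
Qed.

(* A nonzero defect would, by the intermediate value theorem, take three distinct values at
   critical points, i.e. [f] would meet three distinct roots of [P]. *)
Lemma second_order_ode x : ddf x = F (f x).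
Proof.
  set (D := fun x => ddf x - F (f x)).
  destruct (Req_dec (D x) 0) as [|Hx]; [unfold D in *; lra|exfalso].
  destruct exists_df_neq_0 as [x1 Hx1].
  assert (D1 : D x1 = 0).
  { destruct (Rmult_integral _ _ (df_mul_accel_defect x1)); [contradiction|assumption]. }
  assert (Dc : continuity D).
  { intros y. apply continuity_pt_filterlim, accel_defect_continuous. }
  destruct (IVT_gen D x1 x (D x / 2) Dc) as [x2 [_ D2]].
  { rewrite D1. unfold Rmin, Rmax. destruct (Rle_dec 0 (D x)); lra. }
  destruct (IVT_gen D x1 x (D x / 4) Dc) as [x3 [_ D3]].
  { rewrite D1. unfold Rmin, Rmax. destruct (Rle_dec 0 (D x)); lra. }
  assert (Hnz : forall y, D y = D x / 2 \/ D y = D x / 4 -> D y <> 0).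
  { intros y [E|E] E0; apply Hx; lra. }
  destruct (accel_defect_nonzero x Hx) as [P0 V0].
  destruct (accel_defect_nonzero x2 (Hnz x2 (or_introl D2))) as [P2 V2].
  destruct (accel_defect_nonzero x3 (Hnz x3 (or_intror D3))) as [P3 V3].
  change (D x = delaunay_dU k mu (f x)) in V0. change (D x2 = delaunay_dU k mu (f x2)) in V2.
  change (D x3 = delaunay_dU k mu (f x3)) in V3.
  apply (delaunay_P_no_three_roots k mu (f x) (f x2) (f x3)); try apply f_pos; try assumption;
    intros E; apply Hx; [rewrite E in V0|rewrite E in V0|rewrite E in V2]; lra.
Qed.

Lemma a_fun_eq x : a_fun f x = df x * U (f x).
Proof. unfold a_fun. rewrite sqrt_slope_eq. unfold Rdiv. rewrite Rinv_inv. reflexivity. Qed.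

Lemma is_derive_a_fun x : is_derive (a_fun f) x (- delaunay_dU k mu (f x)).
Proof.
  apply (is_derive_ext (fun x => df x * U (f x))); [intros t; symmetry; apply a_fun_eq|].
  replace (- delaunay_dU k mu (f x))
    with (ddf x * U (f x) + df x * (df x * delaunay_dU k mu (f x))).
  - apply (Derive.is_derive_mult df (fun t => U (f t))); [apply is_derive_df|apply is_derive_U_f].
  - pose proof (slope_sq_eq x). pose proof (delaunay_U_pos k mu (f x) mu_ge0 (f_pos x)).
    replace (df x * (df x * delaunay_dU k mu (f x))) with (df x ^ 2 * delaunay_dU k mu (f x)) by ring.
    replace (df x ^ 2) with (/ U (f x) ^ 2 - 1) by lra.
    rewrite second_order_ode. unfold delaunay_F. field. lra.
Qed.

Lemma Derive_a_fun x : Derive (a_fun f) x = - delaunay_dU k mu (f x).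
Proof. apply is_derive_unique, is_derive_a_fun. Qed.

(* The flux [f^(n-1) a' / sqrt (1 + f'^2)] is [delaunay_flux] evaluated along [f]. *)
Lemma a_fun_jacobi x :
  lap_rad (S (S k)) f (a_fun f) x - V_pot (S (S k)) mu f x * a_fun f x = 0.
Proof.
  unfold lap_rad, V_pot. change (S (S k) - 1)%nat with (S k).
  assert (Hflux : forall y, f y ^ S k * Derive (a_fun f) y / sqrt (1 + df y ^ 2)
                            = delaunay_flux k mu (f y)).
  { intros y. rewrite Derive_a_fun, sqrt_slope_eq. unfold Rdiv. rewrite Rinv_inv.
    unfold delaunay_flux. rewrite <- (delaunay_U_mul k mu (f y) (f_pos y)). ring. }
  pose proof (is_derive_delaunay_flux k mu (f x) (f_pos x)) as Hdflux.
  rewrite (Derive_ext _ _ x Hflux), Derive_comp, (is_derive_unique _ _ _ Hdflux);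
    [|eexists; exact Hdflux|eexists; apply is_derive_f].
  rewrite a_fun_eq, sqrt_slope_eq.
  pose proof (delaunay_U_pos k mu (f x) mu_ge0 (f_pos x)).
  pose proof (pow_lt (f x) (S k) (f_pos x)). pose proof (pow_lt (f x) (2 * S (S k)) (f_pos x)).
  field. lra.
Qed.

Variables (am T : R).
Hypothesis am_root : delaunay_P k mu am = 0.
Hypothesis f_0 : f 0 = am.
Hypothesis T_pos : 0 < T.
Hypothesis f_periodic : forall x, f (x + T) = f x.
Hypothesis f_gt_am : forall t, 0 < t < T -> am < f t.

Lemma df_periodic x : df (x + T) = df x.
Proof.
  symmetry. apply is_derive_unique.
  apply (is_derive_ext (fun u => f (u + T))); [intros; apply f_periodic|].
  apply is_derive_shift, is_derive_f.
Qed.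

Lemma f_ge_am x : am <= f x.
Proof.
  destruct (period_floor T x T_pos) as [j Hj].
  replace x with ((x - IZR j * T) + IZR j * T) by ring.
  rewrite (periodic_Z f T f_periodic).
  destruct (Req_dec (x - IZR j * T) 0) as [->|Hne]; [rewrite f_0; lra|].
  apply Rlt_le, f_gt_am. lra.
Qed.

(* [U (f x) <= 1] because [1 + f'^2 >= 1], and [U y >= y]. *)
Lemma f_le_1 x : f x <= 1.
Proof.
  pose proof (slope_sq_eq x) as Hsq. pose proof (delaunay_U_pos k mu (f x) mu_ge0 (f_pos x)).
  assert (HU1 : U (f x) <= 1).
  { destruct (Rle_or_lt (U (f x)) 1) as [|Hgt]; [assumption|exfalso].
    assert (/ U (f x) ^ 2 < 1) by (rewrite <- Rinv_1; apply Rinv_lt_contravar; nra).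
    pose proof (pow2_ge_0 (df x)). lra. }
  unfold delaunay_U in HU1. pose proof (pow_lt (f x) (S k) (f_pos x)).
  assert (0 <= mu / f x ^ S k) by (apply Rdiv_le_0_compat; lra). lra.
Qed.

Lemma profile_reflect (c x0 : R) :
  f (c - x0) = f x0 -> df (c - x0) = - df x0 -> forall u, f (c - u) = f u.
Proof.
  intros E0 E1.
  assert (Hrange : forall x, am <= f x <= 1) by (intros x; split; [apply f_ge_am|apply f_le_1]).
  assert (Ham : 0 < am) by (rewrite <- f_0; apply f_pos).
  destruct (lipschitz_on_of_continuous_derivative F (delaunay_dF k mu) am 1) as [L [HL Hlip]].
  - pose proof (Hrange 0). lra.
  - intros y Hy. apply is_derive_delaunay_F; lra.
  - intros y Hy. apply continuity_pt_delaunay_dF; lra.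
  - assert (Dr : forall u, is_derive (fun u => f (c - u)) u (- df (c - u)))
      by (intros u; apply is_derive_reflect, is_derive_f).
    assert (DEr : forall u, Derive (fun u => f (c - u)) u = - df (c - u))
      by (intros u; apply is_derive_unique, Dr).
    apply (ode2_autonomous_unique F L (fun u => f (c - u)) f x0 HL).
    + intros x. apply Hlip; apply Hrange.
    + intros x. rewrite DEr. apply Dr.
    + intros x. apply (is_derive_ext (fun u => - df (c - u))); [intros t; symmetry; apply DEr|].
      rewrite <- second_order_ode, <- (Ropp_involutive (ddf (c - x))).
      apply (is_derive_reflect (fun y => - df y)), (is_derive_opp df), is_derive_df.
    + exact is_derive_f.
    + intros x. rewrite <- second_order_ode. apply is_derive_df.
    + exact E0.
    + rewrite DEr, E1, Ropp_involutive. reflexivity.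
Qed.

Lemma df_0 : df 0 = 0.
Proof. apply df_eq_0_iff. rewrite f_0. exact am_root. Qed.

Lemma f_symmetric u : f (T - u) = f u.
Proof.
  apply (profile_reflect T 0); rewrite Rminus_0_r, <- (Rplus_0_l T).
  - apply f_periodic.
  - rewrite df_periodic, df_0. ring.
Qed.

Lemma df_antisymmetric u : df (T - u) = - df u.
Proof.
  assert (H : is_derive f u (- df (T - u))).
  { apply (is_derive_ext (fun u => f (T - u))); [intros; apply f_symmetric|].
    apply is_derive_reflect, is_derive_f. }
  rewrite (is_derive_unique _ _ _ H). ring.
Qed.

Lemma df_half_period : df (T / 2) = 0.
Proof.
  pose proof (df_antisymmetric (T / 2)) as H.
  replace (T - T / 2) with (T / 2) in H by field. lra.
Qed.

(* A critical point [x] in [(0, T/2)] would make [f] symmetric about [x], so [f (2 x) = am]. *)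
Lemma df_neq_0 x : 0 < x < T / 2 -> df x <> 0.
Proof.
  intros Hx E.
  assert (Hrefl : forall u, f (2 * x - u) = f u).
  { apply (profile_reflect (2 * x) x).
    - f_equal. ring.
    - replace (2 * x - x) with x by ring. rewrite E. ring. }
  pose proof (Hrefl 0) as H0. rewrite Rminus_0_r, f_0 in H0.
  pose proof (f_gt_am (2 * x) ltac:(lra)). lra.
Qed.

Lemma df_pos x : 0 < x < T / 2 -> 0 < df x.
Proof.
  intros Hx.
  destruct (MVT_cor2 f df 0 (T / 2) ltac:(lra)) as [c1 [Hc1 Hc1T]].
  { intros t _. apply is_derive_Reals, is_derive_f. }
  assert (Hdc1 : 0 < df c1).
  { pose proof (f_gt_am (T / 2) ltac:(lra)). rewrite f_0 in Hc1.
    destruct (Rle_or_lt (df c1) 0) as [Hle|]; [|assumption].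
    assert (df c1 * (T / 2 - 0) <= 0) by (apply Rmult_le_0_r; lra). lra. }
  destruct (Rle_or_lt (df x) 0) as [Hle|]; [exfalso|assumption].
  assert (Hc : continuity df).
  { intros y. apply continuity_pt_filterlim, (ex_derive_continuous df).
    eexists. apply is_derive_df. }
  destruct (IVT_gen df c1 x 0 Hc) as [x' [Hx' Ex']].
  { unfold Rmin, Rmax. destruct (Rle_dec (df c1) (df x)); lra. }
  apply (df_neq_0 x'); [|exact Ex'].
  unfold Rmin, Rmax in Hx'. destruct (Rle_dec c1 x); lra.
Qed.

Lemma df_eq_0_iff_half_period x : df x = 0 <-> exists j : Z, x = IZR j * T / 2.
Proof.
  split.
  - intros E. destruct (period_floor T x T_pos) as [j Hj].
    set (r := x - IZR j * T).
    assert (Er : df r = 0).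
    { rewrite <- E. unfold r. rewrite <- (periodic_Z df T df_periodic j). f_equal. ring. }
    destruct (Req_dec r 0) as [R0|R0]; [|destruct (Req_dec r (T / 2)) as [R1|R1]].
    + exists (2 * j)%Z. rewrite mult_IZR. unfold r in R0. lra.
    + exists (2 * j + 1)%Z. rewrite plus_IZR, mult_IZR. unfold r in R1. lra.
    + exfalso. destruct (Rlt_or_le r (T / 2)).
      * apply (df_neq_0 r); [unfold r in *; lra|exact Er].
      * pose proof (df_antisymmetric r). pose proof (df_pos (T - r) ltac:(unfold r in *; lra)). lra.
  - intros [j Hj]. rewrite (Z.div2_odd j), plus_IZR, mult_IZR in Hj.
    destruct (Z.odd j); simpl Z.b2z in Hj.
    + replace x with (T / 2 + IZR (Z.div2 j) * T) by (rewrite Hj; field).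
      rewrite (periodic_Z df T df_periodic). exact df_half_period.
    + replace x with (0 + IZR (Z.div2 j) * T) by (rewrite Hj; field).
      rewrite (periodic_Z df T df_periodic). exact df_0.
Qed.

Lemma a_fun_eq_0_iff x : a_fun f x = 0 <-> exists j : Z, x = IZR j * T / 2.
Proof.
  rewrite a_fun_eq, <- df_eq_0_iff_half_period.
  pose proof (delaunay_U_pos k mu (f x) mu_ge0 (f_pos x)).
  split; [intros E; destruct (Rmult_integral _ _ E); lra|intros ->; ring].
Qed.

Lemma pow_f_increasing x y : 0 <= x -> x < y -> y <= T / 2 -> f x ^ S (S k) < f y ^ S (S k).
Proof.
  apply (strict_increasing_on_of_is_derive_pos (fun x => f x ^ S (S k))
           (fun x => INR (S (S k)) * df x * f x ^ S k) 0 (T / 2)).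
  - intros t _. apply is_derive_pow, is_derive_f.
  - intros t Ht. apply Rmult_lt_0_compat; [apply Rmult_lt_0_compat|].
    + apply lt_0_INR. lia.
    + apply df_pos, Ht.
    + apply pow_lt, f_pos.
Qed.

Lemma Derive_a_fun_eq_0_iff z : Derive (a_fun f) z = 0 <-> f z ^ S (S k) = INR (S k) * mu.
Proof.
  rewrite Derive_a_fun. unfold delaunay_dU. pose proof (pow_lt (f z) (S (S k)) (f_pos z)).
  split; intros E.
  - assert (H1 : INR (S k) * mu / f z ^ S (S k) = 1) by lra.
    assert (Hc : INR (S k) * mu = INR (S k) * mu / f z ^ S (S k) * f z ^ S (S k)) by (field; lra).
    rewrite H1 in Hc. lra.
  - rewrite <- E. field. lra.
Qed.

(* [f^n] increases on [[0, T/2]] from [am^n] to [f (T/2)^n], and the critical value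
   [(n - 1) mu] lies strictly between: [am] and [f (T/2)] are roots of [P] on either side
   of [(n - 1) / n]. *)
Lemma a_fun_critical_points : exists z1 z2,
  0 < z1 < T / 2 /\ T / 2 < z2 < T /\
  Derive (a_fun f) z1 = 0 /\ Derive (a_fun f) z2 = 0 /\
  (forall z, 0 <= z <= T -> Derive (a_fun f) z = 0 -> z = z1 \/ z = z2).
Proof.
  set (g := fun x => f x ^ S (S k)).
  assert (Ham : 0 < am) by (rewrite <- f_0; apply f_pos).
  assert (Hhalf : delaunay_P k mu (f (T / 2)) = 0) by apply df_eq_0_iff, df_half_period.
  destruct (delaunay_P_roots_separated k mu am (f (T / 2)) Ham (f_gt_am (T / 2) ltac:(lra))
              am_root Hhalf) as [Hlo Hhi].
  assert (Hg0 : am ^ S (S k) < INR (S k) * mu).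
  { pose proof (delaunay_P_root_pow_sub k mu am am_root). pose proof (pow_lt am (S k) Ham).
    nra. }
  assert (HgT : INR (S k) * mu < f (T / 2) ^ S (S k)).
  { pose proof (delaunay_P_root_pow_sub k mu (f (T / 2)) Hhalf).
    pose proof (pow_lt (f (T / 2)) (S k) (f_pos _)). nra. }
  assert (Hgc : continuity g).
  { intros x. apply continuity_pt_filterlim, (ex_derive_continuous g).
    eexists. apply is_derive_pow, is_derive_f. }
  destruct (IVT_gen g 0 (T / 2) (INR (S k) * mu) Hgc) as [z1 [Hz1 Ez1]].
  { unfold g, Rmin, Rmax. rewrite f_0. destruct (Rle_dec (am ^ S (S k)) (f (T / 2) ^ S (S k))); lra. }
  rewrite Rmin_left, Rmax_right in Hz1 by lra.
  assert (Hz1' : 0 < z1 < T / 2).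
  { unfold g in Ez1. split; apply Rnot_le_lt; intros Hle.
    - replace z1 with 0 in Ez1 by lra. rewrite f_0 in Ez1. lra.
    - replace z1 with (T / 2) in Ez1 by lra. lra. }
  assert (Huniq : forall z, 0 <= z <= T / 2 -> g z = INR (S k) * mu -> z = z1).
  { intros z Hz Ez. destruct (Rtotal_order z z1) as [Hlt|[|Hgt]]; [exfalso| assumption |exfalso].
    - pose proof (pow_f_increasing z z1 (proj1 Hz) Hlt ltac:(lra)). unfold g in *. lra.
    - pose proof (pow_f_increasing z1 z (proj1 Hz1) Hgt ltac:(lra)). unfold g in *. lra. }
  exists z1, (T - z1). split; [exact Hz1'|]. split; [lra|].
  split; [apply Derive_a_fun_eq_0_iff, Ez1|].
  split; [apply Derive_a_fun_eq_0_iff; rewrite f_symmetric; apply Ez1|].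
  intros z Hz Ez. apply Derive_a_fun_eq_0_iff in Ez.
  destruct (Rle_or_lt z (T / 2)).
  - left. apply Huniq; [lra|exact Ez].
  - right. enough (T - z = z1) by lra.
    apply Huniq; [lra|]. unfold g. rewrite f_symmetric. exact Ez.
Qed.

End DelaunayProfile.

Theorem lemma3p2 (n : nat) (mu : R) (f : R -> R) (am T : R)
  (Hn : (2 <= n)%nat)
  (Hmu : 0 < mu < / INR n * ((INR n - 1) / INR n) ^ (n - 1))
  (Hsmooth : forall (k : nat) (x : R), ex_derive_n f k x)
  (Hpos : forall x, 0 < f x)
  (Hnonconst : exists x y, f x <> f y)
  (Hode : delaunay_ode n mu f)
  (Ham : is_a_minus n mu am)
  (Hf0 : f 0 = am)
  (HT : 0 < T)
  (Hper : forall x, f (x + T) = f x)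
  (HTmin : f T = am /\ forall t, 0 < t < T -> am < f t) :
  (forall x, lap_rad n f (a_fun f) x - V_pot n mu f x * a_fun f x = 0) /\
  (forall x, a_fun f x = 0 <-> exists k : Z, x = IZR k * T / 2) /\
  (exists z1 z2,
      0 < z1 < T / 2 /\ T / 2 < z2 < T /\
      Derive (a_fun f) z1 = 0 /\ Derive (a_fun f) z2 = 0 /\
      (forall z, 0 <= z <= T -> Derive (a_fun f) z = 0 -> z = z1 \/ z = z2)).
Proof.
  destruct n as [|[|k]]; [lia|lia|].
  destruct Ham as [_ [Ham_root _]], HTmin as [_ HTmin].
  assert (Hmu0 : 0 <= mu) by lra.
  split; [|split].
  - intros x. apply a_fun_jacobi; assumption.
  - intros x. eapply a_fun_eq_0_iff; eassumption.
  - eapply a_fun_critical_points; eassumption.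
Qed.
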